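(* Let $\Sigma$ be a finite alphabet, $S=s_0\cdots s_{m-1}\in\Sigma^m$, and $a,a'\in\Sigma^m$ with $\mathrm{rep}_{\mathrm{Sub}(S)}(a)=\mathrm{rep}_{\mathrm{Sub}(S)}(a')$. Then $f^S_{\mathrm{BMH}}(a)=f^S_{\mathrm{BMH}}(a')$ and $g^S_{\mathrm{BMH}}(a)=g^S_{\mathrm{BMH}}(a')$.
   Context: $\mathrm{Sub}(S)$ is the set of all substrings of $S$, including $\varepsilon$; $\mathrm{rep}_{\mathrm{Sub}(S)}(a)$ is the longest suffix of $a$ that is a substring of $S$. For a window $w=w_0\cdots w_{m-1}$: the Boyer–Moore–Horspool cost is $f^S_{\mathrm{BMH}}(w)=m$ if $w=S$ and otherwise $\min\{i\in\{1,\dots,m\}: w_{m-i}\ne s_{m-i}\}$. The BMH shift is $g^S_{\mathrm{BMH}}(w)=bc^S(w,1)$, where $bc^S(w,1)=m$ if $w_{m-1}\notin\{s_0,\dots,s_{m-2}\}$ and otherwise $\min\{k\in\{1,\dots,m-1\}: w_{m-1}=s_{m-1-k}\}$. *)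

From mathcomp Require Import all_boot.
Set Implicit Arguments. Unset Strict Implicit. Unset Printing Implicit Defensive.

Section BMH.
Variable T : finType.

Definition in_Sub (S u : seq T) : bool := infix u S.

(* rep_{Sub(S)}(a): the longest suffix of a that is a substring of S.
   Suffixes of a are drop k a (k = 0..size a); the longest one is the one
   with the least k (k = size a always works, giving the empty word). *)
Definition rep_Sub (S a : seq T) : seq T :=
  drop (find (fun k => in_Sub S (drop k a)) (iota 0 (size a).+1)) a.

(* w_i, as an option (indices used are always in range). *)
Definition at_ (w : seq T) (i : nat) : option T := onth w i.

Definition f_BMH (S w : seq T) : nat :=
  let m := size S in
  if w == S then m
  else (find (fun i => at_ w (m - i) != at_ S (m - i)) (iota 1 m)).+1.

Definition bc1 (S w : seq T) : nat :=
  let m := size S in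
  let c := at_ w (m - 1) in
  if c \notin [seq Some x | x <- take (m - 1) S] then m
  else (find (fun k => c == at_ S (m - 1 - k)) (iota 1 (m - 1))).+1.

Definition g_BMH (S w : seq T) : nat := bc1 S w.

End BMH.

(** The cost and the shift of Boyer-Moore-Horspool only read the window
    through its longest suffix [r] that occurs in [S].  Both compare the
    window against [S] from the right.  For the cost, the common suffix of
    the window and [S] is itself a substring of [S], hence no longer than
    [r]; so the first mismatch is found inside [r], or right in front of it.
    For the shift, the last letter of the window is the last letter of [r],
    unless [r] is empty, in which case that letter does not occur in [S] and
    the shift is [m] regardless. *)

From mathcomp Require Import all_boot zify.
Set Implicit Arguments. Unset Strict Implicit. Unset Printing Implicit Defensive.

Lemma onth_drop (T : Type) (s : seq T) n i : onth (drop n s) i = onth s (n + i).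
Proof. by rewrite !onthE map_drop nth_drop. Qed.

Lemma onth_last_drop (T : Type) (s : seq T) k :
  k < size s -> onth (drop k s) (size (drop k s) - 1) = onth s (size s - 1).
Proof. by move=> ks; rewrite onth_drop size_drop; congr onth; lia. Qed.

Lemma drop_eq_onth (T : Type) (s1 s2 : seq T) n :
  size s1 = size s2 -> (forall i, n <= i < size s1 -> onth s1 i = onth s2 i) ->
  drop n s1 = drop n s2.
Proof.
move=> eq_sz eq_onth; apply: eq_from_onth => t; rewrite !onth_drop.
have [lt_s1|ge_s1] := ltnP (n + t) (size s1); first by apply: eq_onth; lia.
by rewrite !onth_default -?eq_sz.
Qed.

Lemma find_iota0_leq (p : pred nat) n N : n < N -> p n -> find p (iota 0 N) <= n.
Proof.
move=> ltnN pn; rewrite leqNgt; apply/negP => /(before_find 0).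
by rewrite nth_iota // add0n pn.
Qed.

Lemma find_take (T : Type) (p : pred T) (s : seq T) i :
  find p s <= i -> find p (take i s) = find p s.
Proof.
have [/take_oversize -> //|lt_i_s] := leqP (size s) i.
rewrite -{1 3}(cat_take_drop i s) find_cat size_take lt_i_s.
by case: ifP => // /negbT/hasNfind ->; rewrite size_take lt_i_s; lia.
Qed.

Section BMHRepresentative.
Variable T : finType.
Implicit Types S a r : seq T.

Definition rep_index S a : nat :=
  find (fun k => in_Sub S (drop k a)) (iota 0 (size a).+1).

Lemma rep_SubE S a : rep_Sub S a = drop (rep_index S a) a.
Proof. by []. Qed.

Lemma rep_index_min S a n :
  n <= size a -> infix (drop n a) S -> rep_index S a <= n.
Proof. by move=> le_n_a; apply: find_iota0_leq. Qed.

Lemma rep_index_le S a : rep_index S a <= size a.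
Proof. by apply: rep_index_min => //; rewrite drop_size; case: S. Qed.

Lemma size_rep_Sub S a : size (rep_Sub S a) = size a - rep_index S a.
Proof. by rewrite rep_SubE size_drop. Qed.

Lemma rep_index_self S : rep_index S S = 0.
Proof. by apply/eqP; rewrite -leqn0 rep_index_min // drop0 infix_refl. Qed.

Definition f_rep S r : nat :=
  (find (fun i => at_ r (size r - i) != at_ S (size S - i)) (iota 1 (size r))).+1.

Section Window.
Variables (S a : seq T).
Hypothesis size_a : size a = size S.
Hypothesis rep_index_gt0 : 0 < rep_index S a.

Let mismatch i := at_ a (size S - i) != at_ S (size S - i).

(* Were the last [size r + 1] letters of [a] those of [S], the suffix of
   [a] one letter longer than [r] would be a substring of [S]. *)
Lemma find_mismatch_leq : find mismatch (iota 1 (size S)) <= size (rep_Sub S a).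
Proof.
have le_k_a := rep_index_le S a; set k := rep_index S a in le_k_a *.
rewrite size_rep_Sub -/k leqNgt; apply/negP => lt_rep_find.
have agree : drop k.-1 a = drop k.-1 S.
  apply: drop_eq_onth => // i lt_i.
  have /(before_find 0) : size S - i - 1 < find mismatch (iota 1 (size S)).
    by apply: leq_ltn_trans lt_rep_find; lia.
  rewrite nth_iota; last by lia.
  rewrite /mismatch /at_; have -> : size S - (1 + (size S - i - 1)) = i by lia.
  by move=> /negbFE/eqP.
have := @rep_index_min S a k.-1 (leq_trans (leq_pred k) le_k_a).
by rewrite agree infix_drop => /(_ isT); rewrite -/k; lia.
Qed.

Lemma f_BMH_rep : f_BMH S a = f_rep S (rep_Sub S a).
Proof.
have neq_a_S : a != S.
  by apply: contraTneq rep_index_gt0 => ->; rewrite rep_index_self.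
rewrite /f_BMH /f_rep (negbTE neq_a_S) -(find_take find_mismatch_leq) take_iota.
have -> : minn (size (rep_Sub S a)) (size S) = size (rep_Sub S a).
  by apply/minn_idPl; rewrite size_rep_Sub; lia.
congr _.+1; apply: eq_in_find => i; rewrite mem_iota => /andP [ge_i lt_i].
rewrite /mismatch rep_SubE /at_ onth_drop; congr (onth _ _ != _).
rewrite size_rep_Sub in lt_i; rewrite size_drop; have := rep_index_le S a; lia.
Qed.

End Window.

Lemma bc1_rep_nil S a :
  size a = size S -> rep_Sub S a = [::] -> bc1 S a = size S.
Proof.
move=> size_a rep_nil; rewrite /bc1.
case last_a: (at_ a (size S - 1)) => [x|]; last by rewrite ifT //; apply/mapP => -[].
rewrite ifT //; apply/negP => /mapP [y /mem_take y_in_S [eq_xy]].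
have drop_last : drop (size S - 1) a = [:: x].
  apply: eq_from_onth => -[|t].
    by rewrite onth_drop addn0 -[LHS]/(at_ _ _) last_a.
  by rewrite onth_drop onth_default /=; [case: t | lia].
have S_gt0 : 0 < size S by rewrite lt0n size_eq0; apply: contraTneq y_in_S => ->.
have := @rep_index_min S a (size S - 1); rewrite size_a leq_subr => /(_ isT).
rewrite drop_last infix1s eq_xy y_in_S => /(_ isT).
by move: (congr1 size rep_nil) (rep_index_le S a); rewrite size_rep_Sub /=; lia.
Qed.

Lemma at_last_rep S a :
  0 < size (rep_Sub S a) ->
  at_ a (size a - 1) = at_ (rep_Sub S a) (size (rep_Sub S a) - 1).
Proof.
move=> rep_gt0; rewrite rep_SubE /at_ onth_last_drop //.
by move: rep_gt0; rewrite size_rep_Sub; lia.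
Qed.

End BMHRepresentative.

Theorem lemma18 (T : finType) (m : nat) (S a a' : seq T) :
  size S = m -> size a = m -> size a' = m ->
  rep_Sub S a = rep_Sub S a' ->
  f_BMH S a = f_BMH S a' /\ g_BMH S a = g_BMH S a'.
Proof.
move=> size_S size_a size_a' eq_rep.
have le_k := rep_index_le S a; have le_k' := rep_index_le S a'.
have eq_k : rep_index S a = rep_index S a'.
  by move: (congr1 size eq_rep); rewrite !size_rep_Sub; lia.
have [k0|k_gt0] := posnP (rep_index S a).
  suff -> : a = a' by [].
  by move: eq_rep; rewrite !rep_SubE -eq_k k0 !drop0.
have k'_gt0 : 0 < rep_index S a' by rewrite -eq_k.
split; first by rewrite !f_BMH_rep ?eq_rep //; lia.
have [/size0nil rep_nil|rep_gt0] := posnP (size (rep_Sub S a)).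
  by rewrite /g_BMH !bc1_rep_nil -?eq_rep //; lia.
have rep'_gt0 : 0 < size (rep_Sub S a') by rewrite -eq_rep.
have last_eq : at_ a (size S - 1) = at_ a' (size S - 1).
  have := at_last_rep rep_gt0; have := at_last_rep rep'_gt0.
  by rewrite size_a size_a' -size_S eq_rep => -> ->.
by rewrite /g_BMH /bc1 last_eq.
Qed.
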